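(* Let $\mathbf i\in\mathsf L^+$ and $\mathbf j\in\mathsf W^+$ with $\mathbf i\ge\mathbf j$, and assume $\mathbf i\neq\mathbf j$ if $|\mathbf i|$ is isotropic odd (i.e. $p(|\mathbf i|)=1$ and $(|\mathbf i|,|\mathbf i|)=0$). Then the concatenation $\mathbf i\mathbf j$ is dominant, i.e. $\mathbf i\mathbf j\in\mathsf W^+$.
   Context: Let $\mathfrak g$ be a basic Lie superalgebra with a fixed simple system $\Pi=\{\alpha_i\mid i\in I\}$, parity $p(i)\in\{0,1\}$, $Q^+=\bigoplus\mathbb Z_{\ge0}\alpha_i$ with parity $p(\sum c_i\alpha_i)=\sum c_ip(i)\bmod 2$, and $(\cdot,\cdot)$ the symmetric bilinear form with $(\alpha_i,\alpha_j)=d_ia_{ij}$ (symmetrized Cartan matrix). $\pi:=-1$, $q$ an indeterminate. $U_q$ is the positive half of the associated quantum supergroup (generated by $e_i$ of degree $\alpha_i$, parity $p(i)$). $\mathsf F$: the free associative $\mathbb Q(q)$-algebra on $I$ with basis the words $\mathbf i=(i_1,\dots,i_d)$, weight $|\mathbf i|=\sum\alpha_{i_s}$, parity $\sum p(i_s)$. Quantum shuffle product: $x\star\emptyset=\emptyset\star x=x$, $(xi)\star(yj)=(x\star(yj))i+\pi^{(p(x)+p(i))p(j)}q^{-(|x|+\alpha_i,\alpha_j)}((xi)\star y)j$ (homogeneous $x,y$, letters $i,j$, juxtaposition = concatenation). There is an injective algebra homomorphism $\Psi:U_q\to(\mathsf F,\star)$ with $\Psi(e_i)=i$; $\mathsf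 U:=\Psi(U_q)$ is the subalgebra generated by the letters. Fix a total order on $I$; order words lexicographically ($\mathbf i<\mathbf j$ if $\mathbf i$ is a proper prefix of $\mathbf j$ or at the first differing position $s$, $i_s<j_s$). $\max(x)$ is the largest word with nonzero coefficient in $x\neq0$. A word is dominant if it equals $\max(u)$ for some $u\in\mathsf U$; $\mathsf W^+$ is the set of dominant words. A nonempty word is Lyndon if it is smaller than all its proper right factors; $\mathsf L^+$ is the set of dominant Lyndon words. *)

From HB Require Import structures.
From mathcomp Require Import all_boot all_order all_algebra.
Set Implicit Arguments. Unset Strict Implicit. Unset Printing Implicit Defensive.
Import Order.TTheory GRing.Theory Num.Theory.
Local Open Scope ring_scope.

Definition Kq : Type := {fraction {poly rat}}.
Definition qq : Kq := FracField.tofrac ('X : {poly rat}).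

Section ShuffleAlgebra.
Variables (d : Order.disp_t) (I : finOrderType d).
(* parity of simple roots and symmetric bilinear form B i j = (alpha_i, alpha_j) *)
Variables (p : I -> bool) (B : I -> I -> int).

Definition wpar (w : seq I) : bool := odd (count p w).
Definition wform (a b : seq I) : int := \sum_(x <- a) \sum_(y <- b) B x y.

Definition twist (x : seq I) (j : I) : Kq :=
  (-1) ^+ (wpar x && p j) * qq ^ (- wform x [:: j]).

(* shc rw ra rb = coefficient of the word rev rw in (rev ra) star (rev rb), computed
   by the defining recursion
   (x i) star (y j) = (x star (y j)) i + pi^{..} q^{-(|x|+alpha_i,alpha_j)} ((x i) star y) j,
   x star [] = [] star x = x, read off on the last letter of the target word. *)
Fixpoint shc (rw ra rb : seq I) : Kq :=
  match rw with
  | [::] => ((ra == [::]) && (rb == [::]))%:R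
  | k :: rw' =>
      (if ra is i :: ra' then (i == k)%:R * shc rw' ra' rb else 0)
    + (if rb is j :: rb' then (j == k)%:R * twist (rev ra) j * shc rw' ra rb' else 0)
  end.

(* Elements of F are represented by their coefficient functions on words. *)
Definition Fel := seq I -> Kq.

Definition word_el (u : seq I) : Fel := fun w => (w == u)%:R.

Definition star (f g : Fel) : Fel := fun w =>
  \sum_(n < (size w).+1) \sum_(a : n.-tuple I) \sum_(b : (size w - n).-tuple I)
     f a * g b * shc (rev w) (rev a) (rev b).

Inductive inU : Fel -> Prop :=
  | inU_one : inU (word_el [::])
  | inU_letter i : inU (word_el [:: i])
  | inU_add f g : inU f -> inU g -> inU (fun w => f w + g w)
  | inU_scale c f : inU f -> inU (fun w => c * f w)
  | inU_star f g : inU f -> inU g -> inU (star f g).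

Fixpoint lex_lt (a b : seq I) : bool :=
  match a, b with
  | [::], [::] => false
  | [::], _ :: _ => true
  | _ :: _, [::] => false
  | x :: a', y :: b' => (x < y)%O || ((x == y) && lex_lt a' b')
  end.
Definition lex_le (a b : seq I) : bool := (a == b) || lex_lt a b.

Definition is_max (u : Fel) (w : seq I) : Prop :=
  u w != 0 /\ forall w', u w' != 0 -> lex_le w' w.

Definition dominant (w : seq I) : Prop := exists u, inU u /\ is_max u w.

Definition lyndon (w : seq I) : bool :=
  (w != [::]) && [forall k : 'I_(size w), (0 < k)%N ==> lex_lt w (drop k w)].

Definition isotropic_odd (w : seq I) : bool := wpar w && (wform w w == 0).

End ShuffleAlgebra.

From HB Require Import structures.
From mathcomp Require Import all_boot all_order all_algebra zify.
Set Implicit Arguments. Unset Strict Implicit. Unset Printing Implicit Defensive.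
Import Order.TTheory Order.DefaultSeqLexiOrder GRing.Theory.

(* Let u, v in U have leading words max u = i (Lyndon) and max v = j <= i.  The
   coefficient of a word w in u * v (quantum shuffle product) is a sum of terms
   u a * v b * coef w a b, and coef w a b vanishes unless w is a shuffle of a
   and b.  The proof shows that u * v has leading word i j:

   A Lyndon word w is lexicographically bounded
     by one of the words it is shuffled from (via the standard factorization
     w = l m with l, m Lyndon).  From this: a shuffle of words whose prefixes
     are bounded by a Lyndon word i is again bounded by i, and if x <= i,
     y <= j <= i then every shuffle of x and y is <= i j, with equality only
     for x = i, y = j.  Hence i j is the only candidate leading word, and its
     coefficient in u * v is u i * v j * coef (i j) i j.
   - Algebra.  coef (i j) i j = pi^{p(i)p(j)} q^{-(|i|,|j|)} + [j = i], since
     only the two shuffles "i then j" and (when j = i) "j then i" produce i j;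
     this is nonzero because q is transcendental and, for j = i, the sum
     vanishes exactly when |i| is isotropic odd. *)

Lemma drop_catl (T : Type) n (s t : seq T) :
  n <= size s -> drop n (s ++ t) = drop n s ++ t.
Proof.
rewrite drop_cat leq_eqVlt => /orP[/eqP->|->//].
by rewrite ltnn subnn drop0 drop_size.
Qed.

Lemma catl_inj (T : eqType) (s : seq T) : injective (cat s).
Proof. by move=> a b /eqP; rewrite eqseq_cat // eqxx => /eqP. Qed.

Lemma short_not_cat (T : Type) (a i b : seq T) : size a < size i -> a <> i ++ b.
Proof. by move=> sa ea; move: sa; rewrite ea size_cat ltnNge leq_addr. Qed.

Section LexOrder.
Variables (d : Order.disp_t) (T : orderType d).
Implicit Types (x y : T) (a b c s t : seq T).

Lemma lexi_catl s a b : (s ++ a <= s ++ b)%O = (a <= b)%O.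
Proof. by elim: s => //= x s IH; rewrite eqhead_lexiE. Qed.

Lemma ltxi_catl s a b : (s ++ a < s ++ b)%O = (a < b)%O.
Proof. by elim: s => //= x s IH; rewrite eqhead_ltxiE. Qed.

Lemma lexi_catr a t : (a <= a ++ t)%O.
Proof. by rewrite -{1}[a]cats0 lexi_catl lexi0s. Qed.

Lemma ltxi_catr a t : t != [::] -> (a < a ++ t)%O.
Proof. by rewrite -{1}[a]cats0 ltxi_catl ltxi0s. Qed.

Lemma lexi_cat_nil a t : (a ++ t <= a)%O -> t = [::].
Proof. by case: (eqVneq t [::]) => // /(ltxi_catr a); rewrite ltNge => /negbTE ->. Qed.

Lemma lexi_take n a b : (a <= b)%O -> (take n a <= take n b)%O.
Proof.
elim: n a b => [|n IH] [|x a] [|y b] //=; rewrite !lexi_cons.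
by case/andP=> -> /implyP ab; apply/implyP => /ab /IH.
Qed.

(* [ltdiff a b]: a and b differ at some position where both are defined and
   a has the smaller letter there.  Unlike [<], this "decided" comparison
   survives arbitrary right extensions of a and b. *)
Fixpoint ltdiff a b := match a, b with
  | x :: a', y :: b' => (x < y)%O || (x == y) && ltdiff a' b'
  | _, _ => false
  end.

Lemma ltdiff_catl s a b : ltdiff (s ++ a) (s ++ b) = ltdiff a b.
Proof. by elim: s => //= x s ->; rewrite ltxx eqxx. Qed.

Lemma ltdiff_cat a b s t : ltdiff a b -> ltdiff (a ++ s) (b ++ t).
Proof.
elim: a b => [|x a IH] [|y b] //= /orP[->//|/andP[-> /IH ->]].
by rewrite orbT.
Qed.

Lemma ltdiff_trans a b c : ltdiff a b -> ltdiff b c -> ltdiff a c.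
Proof.
elim: a b c => [|x a IH] [|y b] [|z c] //=.
case/orP=> [xy|/andP[/eqP <- ab]]; case/orP=> [yz|/andP[/eqP <- bc]].
- by rewrite (lt_trans xy yz).
- by rewrite xy.
- by rewrite yz.
- by rewrite eqxx (IH _ _ ab bc) orbT.
Qed.

Lemma ltdiffW a b : ltdiff a b -> (a < b)%O.
Proof.
elim: a b => [|x a IH] [|y b] //=; rewrite ltxi_cons.
by case/orP=> [xy|/andP[/eqP <- /IH ->]]; rewrite ?lexx // ltW // lt_geF.
Qed.

Lemma lt_ltdiff a b : (a < b)%O -> size b <= size a -> ltdiff a b.
Proof.
elim: a b => [|x a IH] [|y b] //=; rewrite ltxi_cons ltnS.
by case: (ltgtP x y) => //= _ /IH.
Qed.

Lemma le_ltdiff a b : (a <= b)%O -> size b <= size a -> a = b \/ ltdiff a b.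
Proof. by rewrite le_eqVlt => /orP[/eqP|/lt_ltdiff]; auto. Qed.

Lemma lt_cases a b : (a < b)%O -> ltdiff a b \/ exists2 t, t != [::] & b = a ++ t.
Proof.
elim: a b => [|x a IH] [|y b] //=; first by right; exists (y :: b).
rewrite ltxi_cons; case: (ltgtP x y) => //= [xy _|<-]; first by left.
by case/IH => [|[t t0 ->]]; [left | right; exists t].
Qed.

Lemma ltdiff_split a b : ltdiff a b ->
  exists s x y a' b', [/\ a = s ++ x :: a', b = s ++ y :: b' & (x < y)%O].
Proof.
elim: a b => [|z a IH] [|y b] //= /orP[zy|/andP[/eqP <- /IH[s [x [x' [a' [b' [-> -> xx']]]]]]]].
  by exists [::], z, y, a, b.
by exists (z :: s), x, x', a', b'.
Qed.

Lemma take_lt_cat (w i j : seq T) : (take (size i) w < i)%O -> (w < i ++ j)%O.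
Proof.
case/lt_cases => [hd|[t t0 ei]].
  by rewrite -(cat_take_drop (size i) w); apply/ltdiffW/ltdiff_cat.
case: (ltnP (size w) (size i)) => sw.
  rewrite ei take_oversize ?(ltnW sw) // -catA ltxi_catr //.
  by rewrite -size_eq0 size_cat addn_eq0 size_eq0 negb_and t0.
have : size i = size i + size t by rewrite {1}ei size_cat size_takel.
by move/eqP; rewrite -{1}[size i]addn0 eqn_add2l eq_sym size_eq0 (negbTE t0).
Qed.

End LexOrder.

Section Shuffle.
Variable T : eqType.
Implicit Types (k x y : T) (w a b : seq T).

Fixpoint shuffleb w a b : bool :=
  match w with
  | [::] => (a == [::]) && (b == [::])
  | k :: w' =>
      (if a is x :: a' then (x == k) && shuffleb w' a' b else false)
   || (if b is y :: b' then (y == k) && shuffleb w' a b' else false)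
  end.

(* [shuffle w a b]: w is a shuffle of a and b, tested on the reversed words so
   that it follows the recursion of the coefficients [shc] on the last letter. *)
Definition shuffle w a b := shuffleb (rev w) (rev a) (rev b).

Lemma shufflebC w a b : shuffleb w a b = shuffleb w b a.
Proof.
elim: w a b => [|k w IH] [|x a] [|y b] //=; rewrite ?andbT ?orbF; try by rewrite IH.
by rewrite (IH a) (IH (x :: a)) orbC.
Qed.

Lemma shuffleb_size w a b : shuffleb w a b -> size w = size a + size b.
Proof.
elim: w a b => [|k w IH] a b /=; first by case/andP=> /eqP -> /eqP ->.
case/orP; first by case: a => // x a /andP[_ /IH ->].
by case: b => // y b /andP[_ /IH ->]; rewrite addnS.
Qed.

Lemma shuffleb_nilr w a : shuffleb w a [::] = (w == a).
Proof. by elim: w a => [|k w IH] [|x a] //=; rewrite orbF IH eqseq_cons eq_sym. Qed.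

Lemma shuffleb_cat w1 w2 a b : shuffleb (w1 ++ w2) a b ->
  exists a1 a2 b1 b2, [/\ a = a1 ++ a2, b = b1 ++ b2,
     shuffleb w1 a1 b1 & shuffleb w2 a2 b2].
Proof.
elim: w1 a b => [|k w1 IH] a b /=; first by exists [::], a, [::], b.
case/orP.
- case: a => // x a /andP[/eqP <- /IH[a1 [a2 [b1 [b2 [-> -> h1 h2]]]]]].
  by exists (x :: a1), a2, b1, b2; rewrite /= eqxx h1.
- case: b => // y b /andP[/eqP <- /IH[a1 [a2 [b1 [b2 [-> -> h1 h2]]]]]].
  by exists a1, a2, (y :: b1), b2; rewrite /= eqxx h1 orbT.
Qed.

Lemma shuffleC w a b : shuffle w a b = shuffle w b a.
Proof. exact: shufflebC. Qed.

Lemma shuffle_size w a b : shuffle w a b -> size w = size a + size b.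
Proof. by move/shuffleb_size; rewrite !size_rev. Qed.

Lemma shuffle_nilr w a : shuffle w a [::] -> w = a.
Proof. by rewrite /shuffle shuffleb_nilr => /eqP/(congr1 rev); rewrite !revK. Qed.

Lemma shuffle_nill w b : shuffle w [::] b -> w = b.
Proof. by rewrite shuffleC => /shuffle_nilr. Qed.

Lemma shuffle_cat w1 w2 a b : shuffle (w1 ++ w2) a b ->
  exists a1 a2 b1 b2, [/\ a = a1 ++ a2, b = b1 ++ b2,
     shuffle w1 a1 b1 & shuffle w2 a2 b2].
Proof.
rewrite /shuffle rev_cat => /shuffleb_cat[a2 [a1 [b2 [b1 [ea eb h2 h1]]]]].
exists (rev a1), (rev a2), (rev b1), (rev b2).
by rewrite -!rev_cat -ea -eb !revK.
Qed.

Lemma shuffle_letter k a b : shuffle [:: k] a b ->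
  (a = [:: k] /\ b = [::]) \/ (a = [::] /\ b = [:: k]).
Proof.
move=> h; have := shuffle_size h.
case: a h => [|x [|? ?]] // h; case: b h => [|y [|? ?]] //= h _.
- by right; rewrite (shuffle_nill h).
- by left; rewrite (shuffle_nilr h).
Qed.

End Shuffle.

Section Lyndon.
Variables (d : Order.disp_t) (I : finOrderType d).
Implicit Types (c e : I) (a b r s w : seq I).

Lemma lex_ltE a b : lex_lt a b = (a < b)%O.
Proof.
elim: a b => [|x a IH] [|y b] //=; rewrite ltxi_cons IH.
by case: (ltgtP x y).
Qed.

Lemma lex_leE a b : lex_le a b = (a <= b)%O.
Proof. by rewrite /lex_le lex_ltE le_eqVlt. Qed.

Lemma lyndon_nil w : lyndon w -> w != [::].
Proof. by case/andP. Qed.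

Lemma lyndon_drop w k : lyndon w -> 0 < k < size w -> (w < drop k w)%O.
Proof.
move=> /andP[_ /forallP hw] /andP[k0 kw].
by have := hw (Ordinal kw); rewrite /= k0 lex_ltE.
Qed.

Lemma lyndonI w : w != [::] ->
  (forall k, 0 < k < size w -> (w < drop k w)%O) -> lyndon w.
Proof.
move=> w0 hw; rewrite /lyndon w0; apply/forallP => k; apply/implyP => k0.
by rewrite lex_ltE hw // k0 ltn_ord.
Qed.

Lemma lyndon_rcons w : lyndon w -> exists w' c, w = rcons w' c.
Proof. by case/lastP: w => [/lyndon_nil//|w' c _]; exists w', c. Qed.

Lemma lyndon_bump s c e r : lyndon (s ++ c :: r) -> (c < e)%O -> lyndon (rcons s e).
Proof.
move=> hl ce; apply: lyndonI; first by rewrite -size_eq0 size_rcons.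
move=> m /andP[m0]; rewrite size_rcons ltnS => ms.
rewrite drop_rcons //; set t := drop m s; set n := size (rcons t c).
have ns : n <= size s by rewrite /n size_rcons size_drop; lia.
have le_ts : (take n s <= rcons t c)%O.
  have hlt : (s ++ c :: r < drop m (s ++ c :: r))%O.
    by apply: lyndon_drop => //; rewrite m0 size_cat /=; lia.
  have := lexi_take n (ltW hlt).
  by rewrite takel_cat // drop_catl // -cat_rcons take_size_cat.
have lt_tc : (rcons t c < rcons t e)%O.
  by rewrite -!cats1 ltxi_catl ltxi_cons ltW //= lt_geF.
have hd : ltdiff (take n s) (rcons t e).
  by apply: lt_ltdiff (le_lt_trans le_ts lt_tc) _; rewrite size_takel // /n !size_rcons.
move/(ltdiff_cat (drop n s ++ [:: e]) [::]): hd.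
by rewrite cats0 catA cat_take_drop cats1 => /ltdiffW.
Qed.

End Lyndon.

Section StandardFactorization.
Variables (d : Order.disp_t) (I : finOrderType d).
Implicit Types (l m r u v w : seq I).

Lemma min_proper_suffix w : 1 < size w -> exists2 k, 0 < k < size w &
  forall k', 0 < k' < size w -> (drop k w <= drop k' w)%O.
Proof.
move=> w1; have P1 : 0 < (Ordinal w1 : 'I_(size w)) by [].
case: (arg_minP (P := fun k : 'I_(size w) => 0 < k) (fun k => drop k w) P1).
move=> k k0 kmin; exists k; first by rewrite k0 ltn_ord.
by move=> k' /andP[k'0 k'w]; exact: (kmin (Ordinal k'w)).
Qed.

(* Standard factorization: cutting a Lyndon word w before its smallest
   proper suffix gives two Lyndon words. *)
Section MinSuffix.
Variables (w : seq I) (k : nat).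
Hypotheses (hw : lyndon w) (hk : 0 < k < size w).
Hypothesis hmin : forall k', 0 < k' < size w -> (drop k w <= drop k' w)%O.

Lemma min_suffix_lyndon : lyndon (drop k w).
Proof.
apply: lyndonI; first by rewrite -size_eq0 size_drop subn_eq0 -ltnNge; case/andP: hk.
move=> t; rewrite size_drop drop_drop => /andP[t0 tk].
rewrite lt_neqAle hmin ?andbT; last by apply/andP; split; lia.
have : size (drop (t + k) w) < size (drop k w) by rewrite !size_drop; lia.
by apply: contraTneq => ->; rewrite ltnn.
Qed.

Lemma min_suffix_prefix_lyndon : lyndon (take k w).
Proof.
set l := take k w; set m := drop k w.
have ew : w = l ++ m by rewrite cat_take_drop.
have sl : size l = k by rewrite size_takel // ltnW //; case/andP: hk.
apply: lyndonI; first by rewrite -size_eq0 sl -lt0n; case/andP: hk.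
move=> t; rewrite sl => /andP[t0 tk]; rewrite ltNge; apply/negP => hle.
have hlt : (l ++ m < drop t l ++ m)%O.
  rewrite -drop_catl -?ew; last by rewrite sl ltnW.
  apply: lyndon_drop => //.
  by rewrite t0 (ltn_trans tk); case/andP: hk.
have st : size (drop t l) < size l by rewrite size_drop sl; clear -t0 tk; lia.
move: hle; rewrite le_eqVlt => /orP[/eqP e|/lt_cases[hd|[r r0 er]]].
- by move: st; rewrite e ltnn.
- by have := ltdiffW (ltdiff_cat m m hd); rewrite ltNge (ltW hlt).
- move: hlt; rewrite {1}er -catA ltxi_catl ltNge => /negP; apply.
  have -> : r ++ m = drop (size (drop t l)) w by rewrite ew {2}er -catA drop_size_cat.
  apply: hmin; rewrite size_drop sl; case/andP: hk => _ kw.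
  by clear -t0 tk kw; lia.
Qed.

End MinSuffix.

Lemma lyndon_factor w : lyndon w -> 1 < size w ->
  exists l m, [/\ w = l ++ m, lyndon l, lyndon m & (l ++ m < m)%O].
Proof.
move=> hw w1; have [k hk hmin] := min_proper_suffix w1.
exists (take k w), (drop k w); rewrite cat_take_drop; split=> //.
- exact: min_suffix_prefix_lyndon.
- exact: min_suffix_lyndon.
- exact: lyndon_drop.
Qed.

(* Inductive step of [lyndon_shuffle_le]: a lower bound l <= u1 on the first
   factor propagates to the factorization l m of a Lyndon word. *)
Lemma lyndon_factor_le l m u1 u2 v1 v2 :
  (l ++ m < m)%O -> size l = size u1 + size v1 -> (l <= u1)%O ->
  (m <= u2)%O || (m <= v2)%O ->
  (l ++ m <= u1 ++ u2)%O || (l ++ m <= v1 ++ v2)%O.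
Proof.
move=> hlm sz hl hm.
case: (le_ltdiff hl _) => [|eu|hd]; first by rewrite sz leq_addr.
- subst u1; have -> : v1 = [::] by apply/size0nil/eqP; rewrite -(eqn_add2l (size l)) -sz addn0.
  case/orP: hm => h; first by rewrite lexi_catl h.
  by rewrite (ltW (lt_le_trans hlm h)) orbT.
- by rewrite (ltW (ltdiffW (ltdiff_cat m u2 hd))).
Qed.

Lemma lyndon_shuffle_le w u v : lyndon w -> shuffle w u v ->
  (w <= u)%O || (w <= v)%O.
Proof.
elim: {w}(size w) {-2}w (leqnn (size w)) u v => [|n IH] w hn u v hw.
  by move: hn; rewrite leqn0 size_eq0 (negbTE (lyndon_nil hw)).
case: (leqP (size w) 1) => w1.
  case: w hw w1 {hn} => [/lyndon_nil//|k [|//]] _ _ /shuffle_letter.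
  by case=> [[-> ->]|[-> ->]]; rewrite lexx ?orbT.
have [l [m [ew hl hm hlm]]] := lyndon_factor hw w1.
move: hn; rewrite ew size_cat => hn.
have sl : size l <= n.
  by rewrite -ltnS (leq_trans _ hn) // -addn1 leq_add2l lt0n size_eq0 lyndon_nil.
have sm : size m <= n.
  by rewrite -ltnS (leq_trans _ hn) // -add1n leq_add2r lt0n size_eq0 lyndon_nil.
case/shuffle_cat=> [u1 [u2 [v1 [v2 [-> -> h1 h2]]]]].
have Hm := IH _ sm _ _ hm h2.
case/orP: (IH _ sl _ _ hl h1) => h.
- exact: lyndon_factor_le (shuffle_size h1) h Hm.
- rewrite orbC; apply: lyndon_factor_le h _ => //; last by rewrite orbC.
  by rewrite (shuffle_size h1) addnC.
Qed.

End StandardFactorization.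

Section PrefixBound.
Variables (d : Order.disp_t) (I : finOrderType d).
Implicit Types (i j a b r w x y z : seq I).

Definition prefix_le a i := (take (size i) a <= i)%O.

Lemma prefix_le_le a i : (a <= i)%O -> prefix_le a i.
Proof.
move=> ai; apply: le_trans ai.
by rewrite -{2}(cat_take_drop (size i) a) lexi_catr.
Qed.

Lemma prefix_le_catl a b i : prefix_le (a ++ b) i -> prefix_le a i.
Proof.
rewrite /prefix_le take_cat; case: ltnP => // ai h.
by rewrite take_oversize //; apply: le_trans h; apply: lexi_catr.
Qed.

Lemma prefix_le_catr a r : prefix_le a (a ++ r).
Proof. by rewrite /prefix_le take_oversize ?lexi_catr // size_cat leq_addr. Qed.

Lemma prefix_le_ltdiff a b i : prefix_le (a ++ b) i -> size a <= size i -> ~~ ltdiff i a.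
Proof.
rewrite /prefix_le take_cat ltnNge => + sa; rewrite sa /= => hle.
apply/negP => /(ltdiff_cat [::] (take (size i - size a) b)).
by rewrite cats0 => /ltdiffW; rewrite ltNge hle.
Qed.

Lemma prefix_le_ge a i : prefix_le a i -> (i <= a)%O -> size a <= size i -> a = i.
Proof.
move=> ha hia sa; case: (le_ltdiff hia sa) => // hd.
by have := @prefix_le_ltdiff a [::] i; rewrite cats0 hd => /(_ ha sa).
Qed.

(* A shuffle of two words bounded by a Lyndon word i is bounded by i: otherwise it
   starts with a Lyndon word s e above i, which bounds one of the two factors. *)
Lemma shuffle_prefix_le i z x y : lyndon i -> shuffle z x y ->
  prefix_le x i -> prefix_le y i -> prefix_le z i.
Proof.
move=> hi hsh hx hy; rewrite /prefix_le leNgt; apply/negP => /lt_ltdiff.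
rewrite size_take_min geq_minl => /(_ isT) /ltdiff_split[s [c [e [a' [b' [Ei Ez ce]]]]]].
have hP : lyndon (rcons s e) by apply: (lyndon_bump (r := a')) ce; rewrite -Ei.
have hiP : ltdiff i (rcons s e) by rewrite Ei -cats1 ltdiff_catl /= ce.
have sPi : size (rcons s e) <= size i by rewrite Ei size_rcons size_cat addnS ltnS leq_addr.
have ez : z = rcons s e ++ (b' ++ drop (size i) z).
  by rewrite -{1}(cat_take_drop (size i) z) Ez cat_rcons -catA.
move: hsh; rewrite ez => /shuffle_cat[x1 [x2 [y1 [y2 [ex ey h1 h2]]]]].
have above_bound u1 u2 : prefix_le (u1 ++ u2) i -> size u1 <= size (rcons s e) ->
    (rcons s e <= u1)%O -> False.
  move=> hu su hle; have su1 := leq_trans su sPi.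
  have hd : ltdiff i u1 by case: (le_ltdiff hle su) => [<-|/(ltdiff_trans hiP)].
  by move: (prefix_le_ltdiff hu su1); rewrite hd.
have s1 := shuffle_size h1.
case/orP: (lyndon_shuffle_le hP h1) => h.
- by apply: (above_bound x1 x2); rewrite -?ex // s1 leq_addr.
- by apply: (above_bound y1 y2); rewrite -?ey // s1 leq_addl.
Qed.

Lemma lyndon_shuffle_trivial i x y : lyndon i -> shuffle i x y ->
  prefix_le x i -> prefix_le y i -> x = [::] \/ y = [::].
Proof.
move=> hi hsh hx hy; have s := shuffle_size hsh.
have nil_other u (v : seq I) : size i = size u + size v -> prefix_le u i -> (i <= u)%O -> v = [::].
  move=> suv hu hiu; have := prefix_le_ge hu hiu; rewrite suv leq_addr => /(_ isT) eu.
  by apply/size0nil/eqP; rewrite -(eqn_add2l (size u)) addn0 -suv eu.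
case/orP: (lyndon_shuffle_le hi hsh) => h.
- by right; apply: (nil_other x y s hx h).
- by left; apply: (nil_other y x _ hy h); rewrite addnC.
Qed.

Lemma shuffle_lyndon_prefix i z x y : lyndon i -> shuffle (i ++ z) x y ->
  prefix_le x i -> prefix_le y i ->
  (exists2 x2, x = i ++ x2 & shuffle z x2 y) \/ (exists2 y2, y = i ++ y2 & shuffle z x y2).
Proof.
move=> hi /shuffle_cat[x1 [x2 [y1 [y2 [-> -> h1 h2]]]]] /prefix_le_catl hx /prefix_le_catl hy.
case: (lyndon_shuffle_trivial hi h1 hx hy) => e; subst.
- by rewrite (shuffle_nill h1); right; exists y2.
- by rewrite (shuffle_nilr h1); left; exists x2; rewrite ?cats0.
Qed.

Lemma shuffle_le_cat i j x y w : lyndon i -> (j <= i)%O -> (x <= i)%O -> (y <= j)%O ->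
  shuffle w x y -> (w <= i ++ j)%O /\ (w = i ++ j -> x = i /\ y = j).
Proof.
move=> hi hji hxi hyj hsh.
have hx := prefix_le_le hxi; have hy := prefix_le_le (le_trans hyj hji).
have := shuffle_prefix_le hi hsh hx hy; rewrite /prefix_le le_eqVlt => /orP[/eqP ew|hlt].
- have {ew} ew : w = i ++ drop (size i) w by rewrite -{1}(cat_take_drop (size i) w) ew.
  move: hsh; rewrite ew; case/shuffle_lyndon_prefix => // [[x2 ex hz]|[y2 ey hz]].
  + have x20 : x2 = [::] by apply: (lexi_cat_nil (a := i)); rewrite -ex.
    subst x x2; rewrite (shuffle_nill hz) lexi_catl hyj.
    by split=> // /catl_inj ->; rewrite cats0.
  + have y20 : y2 = [::] by apply: (lexi_cat_nil (a := i)); rewrite -ey (le_trans hyj).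
    subst y y2; rewrite cats0 in hyj; have eji : j = i by apply: le_anti; rewrite hji.
    subst j; rewrite (shuffle_nilr hz) lexi_catl hxi.
    by split=> // /catl_inj ->; rewrite cats0.
- have hw := take_lt_cat j hlt.
  by split; [exact: ltW | move=> e; move: hw; rewrite e ltxx].
Qed.

End PrefixBound.

Section Coefficients.
Local Open Scope ring_scope.
Variables (d : Order.disp_t) (I : finOrderType d) (p : I -> bool) (B : I -> I -> int).
Implicit Types (a b i j s t w : seq I) (k x y : I).

Definition coef w a b : Kq := shc p B (rev w) (rev a) (rev b).

Lemma coef_rcons w a b k x y : coef (rcons w k) (rcons a x) (rcons b y) =
  (x == k)%:R * coef w a (rcons b y)
  + (y == k)%:R * twist p B (rcons a x) y * coef w (rcons a x) b.
Proof. by rewrite /coef !rev_rcons /= rev_cons revK. Qed.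

Lemma natb_neq0 (c : bool) : (c%:R : Kq) != 0 -> c.
Proof. by case: c; rewrite ?eqxx. Qed.

Lemma shc_shuffleb rw ra rb : shc p B rw ra rb != 0 -> shuffleb rw ra rb.
Proof.
elim: rw ra rb => [|k rw IH] ra rb /=; first by case: (_ && _); rewrite ?eqxx.
case: ra => [|x ra]; case: rb => [|y rb] //=; rewrite ?add0r ?addr0 ?eqxx //.
- by rewrite !mulf_eq0 !negb_or => /andP[/andP[/natb_neq0 -> _] /IH ->].
- by rewrite !mulf_eq0 !negb_or => /andP[/natb_neq0 -> /IH ->].
case: (eqVneq ((x == k)%:R * shc p B rw ra (y :: rb)) 0) => [->|].
  by rewrite add0r !mulf_eq0 !negb_or => /andP[/andP[/natb_neq0 -> _] /IH ->]; rewrite orbT.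
by rewrite !mulf_eq0 !negb_or => /andP[/natb_neq0 -> /IH ->].
Qed.

Lemma coef_eq0 w a b : ~~ shuffle w a b -> coef w a b = 0.
Proof. by apply: contraNeq => /shc_shuffleb. Qed.

Lemma coef_neq0 w a b : coef w a b != 0 -> shuffle w a b.
Proof. exact: shc_shuffleb. Qed.

Lemma coef_nill w : coef w [::] w = 1.
Proof.
rewrite /coef /=; elim: (rev w) => //= k r ->.
by rewrite eqxx /twist /wpar /wform big_nil expr0 mul1r oppr0 expr0z !mulr1 add0r.
Qed.

Lemma coef_nilr w : coef w w [::] = 1.
Proof. by rewrite /coef /=; elim: (rev w) => //= k r ->; rewrite eqxx mulr1 addr0. Qed.

(* For a proper prefix s of a Lyndon word i, i s arises from s * i only by placing
   all of i first, which contributes 1. *)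
Lemma coef_lyndon_prefix i s t : lyndon i -> i = s ++ t -> t != [::] ->
  coef (i ++ s) s i = 1.
Proof.
move=> hi; have [i' [c ic]] := lyndon_rcons hi.
elim/last_ind: s t => [|s x IH] t ei t0; first by rewrite cats0 coef_nill.
rewrite -rcons_cat [X in coef _ _ X]ic coef_rcons eqxx mul1r -ic.
rewrite (IH (x :: t)) -?cat_rcons // coef_eq0 ?mulr0 ?addr0 //.
apply/negP => /(shuffle_lyndon_prefix hi).
have hx : prefix_le (rcons s x) i by rewrite ei; apply: prefix_le_catr.
have hi' : prefix_le i' i by rewrite ic -cats1; apply: prefix_le_catr.
case/(_ hx hi') => [[x2 /short_not_cat + _]|[y2 /short_not_cat + _]]; apply.
- by rewrite ei size_cat -{1}[size _]addn0 ltn_add2l lt0n size_eq0.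
- by rewrite ic size_rcons.
Qed.

End Coefficients.

Section LeadingCoefficient.
Local Open Scope ring_scope.
Variables (d : Order.disp_t) (I : finOrderType d) (p : I -> bool) (B : I -> I -> int).
Implicit Types (i j s : seq I) (k y : I).

Definition twistw i s : Kq := \prod_(y <- s) twist p B i y.

(* The coefficient of i j in i * j for i Lyndon and j <= i: only "all of i
   first" contributes, plus "all of j first" when j = i. *)
Lemma coef_cat_lyndon i j : lyndon i -> (j <= i)%O ->
  coef p B (i ++ j) i j = twistw i j + (j == i)%:R.
Proof.
move=> hi; have [i' [c ic]] := lyndon_rcons hi.
elim/last_ind: j => [|j k IH] hj.
  by rewrite cats0 coef_nilr /twistw big_nil eq_sym (negbTE (lyndon_nil hi)) addr0.
have hj1 : (j <= i)%O by apply: le_trans hj; rewrite -cats1 lexi_catr.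
have ji : (j == i) = false.
  by apply/negbTE/eqP => eji; move: hj; rewrite eji -cats1 => /lexi_cat_nil.
rewrite -rcons_cat [X in coef _ _ _ X _]ic coef_rcons -ic eqxx mul1r (IH hj1) ji addr0.
rewrite /twistw -cats1 big_cat big_seq1 /= cats1 -/(twistw i j) addrC mulrC.
congr (_ + _); case: (eqVneq (rcons j k) i) => [e|ne].
  have [-> ->] : j = i' /\ k = c by move: e; rewrite ic => /rcons_inj[-> ->].
  by rewrite eqxx -ic (@coef_lyndon_prefix _ _ p B i i' [:: c]) ?mulr1 // ic cats1.
rewrite coef_eq0 ?mulr0 //; apply/negP => /(shuffle_lyndon_prefix hi).
have hi' : prefix_le i' i by rewrite ic -cats1; apply: prefix_le_catr.
case/(_ hi' (prefix_le_le hj)) => [[x2 /short_not_cat + _]|[y2 ey _]].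
  by apply; rewrite ic size_rcons.
by move: hj ne; rewrite ey => /lexi_cat_nil ->; rewrite cats0 eqxx.
Qed.

Lemma qq_neq0 : qq != 0.
Proof. by rewrite /qq tofrac_eq0 polyX_eq0. Qed.

Lemma qq_expz_sign (z : int) (b : bool) : qq ^ z = (-1) ^+ b -> z = 0.
Proof.
have qq_expn n : qq ^+ n = (-1) ^+ b -> n = 0%N.
  have -> : (-1) ^+ b = tofrac ((-1) ^+ b : {poly rat}) by rewrite rmorph_sign.
  rewrite /qq -rmorphXn => /eqP; rewrite tofrac_eq => /eqP e.
  have := congr1 (fun c : {poly rat} => size c) e.
  by rewrite /= size_polyXn; case: b {e}; rewrite ?size_polyN size_poly1 => -[].
case: z => n; first by rewrite -exprnP => /qq_expn ->.
rewrite NegzE -invr_expz -exprnP => e.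
by have := qq_expn n.+1; rewrite -[qq ^+ _]invrK e invr_sign => /(_ erefl).
Qed.

Lemma Kq_two_neq0 : (1 + 1 : Kq) != 0.
Proof.
have -> : (1 + 1 : Kq) = tofrac (2%:R : {poly rat}) by rewrite rmorph_nat.
by rewrite tofrac_eq0 -polyC_natr polyC_eq0 Num.Theory.pnatr_eq0.
Qed.

Lemma wform_cons i y s : wform B i (y :: s) = wform B i [:: y] + wform B i s.
Proof. by rewrite /wform -big_split; apply: eq_bigr => x _; rewrite big_cons big_seq1. Qed.

Lemma twistw_formula i s :
  twistw i s = (-1) ^+ (wpar p i && wpar p s) * qq ^ (- wform B i s).
Proof.
elim: s => [|y s IH].
  rewrite /twistw big_nil /wpar /= andbF expr0 mul1r /wform big1 ?oppr0 ?expr0z //.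
  by move=> x _; rewrite big_nil.
have -> : wpar p (y :: s) = p y (+) wpar p s by rewrite /wpar /= oddD oddb.
rewrite /twistw big_cons -/(twistw i s) IH /twist (wform_cons i y s) opprD.
by rewrite expfzDr ?qq_neq0 // andb_addr signr_addb mulrACA.
Qed.

Lemma twistw_neq0 i s : twistw i s != 0.
Proof. by rewrite twistw_formula mulf_neq0 ?signr_eq0 ?expfz_neq0 ?qq_neq0. Qed.

Lemma leading_coef_neq0 i j :
  (isotropic_odd p B i -> i != j) -> twistw i j + (j == i)%:R != 0.
Proof.
case: (eqVneq j i) => [->|_] hiso; last by rewrite addr0 twistw_neq0.
rewrite twistw_formula andbb; apply/eqP => h.
have e1 : (-1) ^+ wpar p i * qq ^ (- wform B i i) = -1 by apply/eqP; rewrite -addr_eq0 h.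
have hq : qq ^ (- wform B i i) = (-1) ^+ (~~ wpar p i).
  by rewrite -[LHS](signrMK (wpar p i)) e1 mulrN1 signrN.
have z0 : wform B i i = 0 by apply/eqP; rewrite -oppr_eq0 (qq_expz_sign hq).
move: h hiso; rewrite /isotropic_odd z0 oppr0 expr0z mulr1.
case: (wpar p i) => [_ /(_ isT)//|].
by rewrite expr0 => /eqP; rewrite (negbTE Kq_two_neq0).
Qed.

End LeadingCoefficient.

Section StarProduct.
Local Open Scope ring_scope.
Variables (d : Order.disp_t) (I : finOrderType d) (p : I -> bool) (B : I -> I -> int).
Implicit Types (f g : Fel I) (a b i j w : seq I).

Lemma sum_neq0 (T : finType) (F : T -> Kq) : \sum_x F x != 0 -> exists x, F x != 0.
Proof.
move=> h; apply/existsP; apply: contraNT h => /existsPn F0.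
by rewrite big1 ?eqxx // => x _; apply/eqP; move/negPn: (F0 x).
Qed.

Lemma star_neq0 f g w : star p B f g w != 0 ->
  exists a b, [/\ f a != 0, g b != 0 & shuffle w a b].
Proof.
move=> /sum_neq0[n /sum_neq0[a /sum_neq0[b]]].
rewrite !mulf_eq0 !negb_or => /andP[/andP[fa gb] /(@coef_neq0 _ _ p B) hs].
by exists (tval a), (tval b); split; [exact: fa | exact: gb | exact: hs].
Qed.

Lemma star_unique f g i j :
  (forall a b, f a != 0 -> g b != 0 -> shuffle (i ++ j) a b -> a = i /\ b = j) ->
  star p B f g (i ++ j) = f i * g j * coef p B (i ++ j) i j.
Proof.
move=> uniq_ij; rewrite /star.
have term0 (a b : seq I) : a != i \/ b != j ->
    f a * g b * coef p B (i ++ j) a b = 0.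
  move=> neq; apply/eqP; rewrite !mulf_eq0 -orbA; apply/negPn/negP.
  rewrite !negb_or => /and3P[fa gb /coef_neq0 /(uniq_ij _ _ fa gb) [ea eb]].
  by move: neq; rewrite ea eb !eqxx; case.
have si : (size i < (size (i ++ j)).+1)%N by rewrite size_cat ltnS leq_addr.
rewrite (bigD1 (Ordinal si)) //= [X in _ + X]big1 ?addr0; last first.
  move=> n ni; apply: big1 => a _; apply: big1 => b _; apply: term0; left.
  by apply: contra ni => /eqP ea; apply/eqP/val_inj; rewrite /= -(size_tuple a) ea.
rewrite (bigD1 (in_tuple i)) //= [X in _ + X]big1 ?addr0; last first.
  move=> a ai; apply: big1 => b _; apply: term0; left.
  by apply: contra ai => /eqP ea; apply/eqP/val_inj.
have sj : size j == (size (i ++ j) - size i)%N by rewrite size_cat addKn.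
rewrite (bigD1 (Tuple sj)) //= [X in _ + X]big1 ?addr0 // => b bj.
by apply: term0; right; apply: contra bj => /eqP eb; apply/eqP/val_inj.
Qed.

End StarProduct.

Unset Implicit Arguments.

Theorem mainTheorem8 (d : Order.disp_t) (I : finOrderType d)
  (p : I -> bool) (B : I -> I -> int) (Bsym : forall x y, B x y = B y x)
  (i j : seq I) :
  lyndon i -> dominant p B i -> dominant p B j -> lex_le j i ->
  (isotropic_odd p B i -> i != j) ->
  dominant p B (i ++ j).
Proof.
move=> hi [u [hu [ui umax]]] [v [hv [vj vmax]]]; rewrite lex_leE => hji hiso.
have bound w a b : u a != 0%R -> v b != 0%R -> shuffle w a b ->
    (w <= i ++ j)%O /\ (w = i ++ j -> a = i /\ b = j).
  move=> /umax; rewrite lex_leE => ai /vmax; rewrite lex_leE => bj.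
  exact: (shuffle_le_cat hi hji ai bj).
exists (star p B u v); split; first exact: inU_star.
split=> [|w /star_neq0[a [b [ua vb hs]]]].
- rewrite star_unique; last first.
    by move=> a b ua vb hs; exact: ((bound _ _ _ ua vb hs).2 erefl).
  rewrite (coef_cat_lyndon p B hi hji).
  exact: GRing.mulf_neq0 (GRing.mulf_neq0 ui vj) (leading_coef_neq0 hiso).
- rewrite lex_leE; exact: (bound w a b ua vb hs).1.
Qed.
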